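(* Fix $r\ge 2$ and $\epsilon>0$. For all sufficiently large $k$, in the random coloring of $[1,M_\epsilon]$ described in the context, the probability that there exists a bad $t$-term arithmetic progression in $[1,M_\epsilon]$ with common difference greater than $b$ is at most $\frac12$.
   Context: Ascending wave: positive integers $w_1<\dots<w_n$ with $w_{i+1}-w_i\ge w_i-w_{i-1}$ for $2\le i\le n-1$; $AW(k;r)$ is the least $N$ such that every $r$-coloring of $\{1,\dots,N\}$ has a monochromatic $k$-term ascending wave. Non-integer quantities used as integers are rounded down; $\log=\log_2$. Fix $r\ge2$, $\epsilon>0$, and $k$. Let $K=\lfloor k/(10(4r-4))\rfloor$, $b=AW(K;r-1)-1$, and $M_\epsilon=\lfloor k^{2r-1-\epsilon}/(2^{r-1}(40r)^{r^2-1})\rfloor$. For each $i\in\{0,\dots,r-1\}$ fix a coloring $\gamma_i$ of $\{1,\dots,b\}$ with colors from $\{0,\dots,r-1\}\setminus\{i\}$ having no monochromatic $K$-term ascending wave. Let $A$ be the $r^2\times 2r$ matrix with rows indexed by pairs $(j,i)$, $j\in\{0,\dots,r-1\}$, $i\in\{1,\dots,r\}$, whose row $(j,i)$ has entry $(m+j)\bmod r$ in position $2m+1$ and entry $(i+m-1+j)\bmod r$ in position $2m+2$, for $m=0,\dots,r-1$. Partition $[1,M_\epsilon]$ into consecutive blocks $B_1,B_2,\dots$ of $b$ integers each (the last possibly partial), and group the blocks into consecutive groups of $2r$ blocks. For each group independently, choose a row $(s_1,\dots,s_{2r})$ of $A$ uniformly at random, give the $l$-th block of the group the label $s_l$, and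 color it by $\gamma_{s_l}$ (translated to that block). An arithmetic progression $x_1<\dots<x_t$ is good if for every $c\in\{0,\dots,r-1\}$ there is a term $x_i$ lying in a block $B_j$ such that $B_j$ and $B_{j+1}$ both have label $c$; otherwise it is bad. Here $t=\frac{(4r-2)(2r+1)}{\log(r^2/(r^2-1))}\log k+\frac{(2r+1)(\log r+1)}{\log(r^2/(r^2-1))}$. *)

From Stdlib Require Import Reals ClassicalDescription.
From mathcomp Require Import all_boot.

Set Implicit Arguments.
Unset Strict Implicit.
Unset Printing Implicit Defensive.

Definition pb (P : Prop) : bool :=
  if excluded_middle_informative P then true else false.

Definition asc_wave (w : nat -> nat) (n : nat) : Prop :=
  (forall i, 1 <= i <= n -> 1 <= w i) /\
  (forall i, 1 <= i < n -> w i < w i.+1) /\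
  (forall i, 2 <= i <= n - 1 -> w i - w i.-1 <= w i.+1 - w i).

Definition AW_prop (k r N : nat) : Prop :=
  forall c : nat -> 'I_r, exists w : nat -> nat,
    asc_wave w k /\ (forall i, 1 <= i <= k -> w i <= N) /\
    (forall i j, 1 <= i <= k -> 1 <= j <= k -> c (w i) = c (w j)).

(* AW(k; r): the least such N (0 if none exists, which does not happen) *)
Definition AW (k r : nat) : nat :=
  match excluded_middle_informative (exists N, pb (AW_prop k r N)) with
  | left h => ex_minn h
  | right _ => 0
  end.

Local Open Scope R_scope.

Definition fl (x : R) : nat := Z.to_nat (Int_part x).

Definition log2 (x : R) : R := (ln x / ln 2).

Definition Meps (r : nat) (eps : R) (k : nat) : nat :=
  fl (Rpower (INR k) (2 * INR r - 1 - eps)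
      / (2 ^ (r - 1) * (40 * INR r) ^ (r * r - 1))).

Definition tlen (r k : nat) : nat :=
  let L := log2 (INR r ^ 2 / (INR r ^ 2 - 1)) in
  fl ((4 * INR r - 2) * (2 * INR r + 1) / L * log2 (INR k)
      + (2 * INR r + 1) * (log2 (INR r) + 1) / L).

Local Close Scope R_scope.

(* entry of row (j, i) (j in {0..r-1}, i in {1..r}) of A in (1-based) position
   pos: position 2m+1 holds (m+j) mod r, position 2m+2 holds (i+m-1+j) mod r *)
Definition Aent (r j i pos : nat) : nat :=
  let m := (pos - 1) %/ 2 in
  if odd pos then (m + j) %% r else (i + m - 1 + j) %% r.

Definition nblocks (b M : nat) : nat := (M + b - 1) %/ b.

Definition ngroups (r b M : nat) : nat := (nblocks b M + 2 * r - 1) %/ (2 * r).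

(* outcome of the random experiment: for each group g, the chosen row
   (j, i) of A, encoded as a pair in 'I_r * 'I_r with i stored as i-1 *)
Definition outcome (r b M : nat) := {ffun 'I_(ngroups r b M) -> 'I_r * 'I_r}.

Definition label (r b M : nat) (om : outcome r b M) (l : nat) : option nat :=
  if (1 <= l <= nblocks b M) then
    match (insub ((l - 1) %/ (2 * r)) : option 'I_(ngroups r b M)) with
    | Some g => let: (j, i) := om g in
                Some (Aent r j i.+1 ((l - 1) %% (2 * r)).+1)
    | None => None
    end
  else None.

Definition in_block (b l x : nat) : Prop := (l - 1) * b < x <= l * b.

Definition good_AP (r b M : nat) (om : outcome r b M) (t a d : nat) : Prop :=
  forall c, c < r -> exists i l, i < t /\ in_block b l (a + i * d) /\
    label om l = Some c /\ label om l.+1 = Some c.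

Definition exists_bad_AP (r b M : nat) (om : outcome r b M) (t : nat) : Prop :=
  exists a d, b < d /\ 1 <= a /\ a + (t - 1) * d <= M /\ ~ good_AP om t a d.

Local Open Scope R_scope.
Definition prob_bad (r b M t : nat) : R :=
  (INR #|[set om : outcome r b M | pb (exists_bad_AP om t)]|
   / INR #|[set: outcome r b M]|).

Local Close Scope R_scope.
Definition Kpar (r k : nat) : nat := k %/ (10 * (4 * r - 4)).
Definition bpar (r k : nat) : nat := AW (Kpar r k) (r - 1) - 1.

(* Each pair of consecutive positions of a row of A, and also the last position of
   a row followed by the first position of the next row, can be given any colour
   pair (c, c) by choosing the rows; hence two consecutive blocks both get label c
   with probability at least 1/r^2.  Along a progression with difference d > b,
   the terms x_1, x_(2r+2), x_(4r+3), ... lie more than 2r+1 blocks apart, so the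
   events "the block of this term and the next block both have label c" involve
   disjoint groups and are independent.  A bad progression misses some colour c at
   all s ~ t/(2r+1) of these tests, which has probability at most (1 - 1/r^2)^s;
   by the choice of t this is at most k^-(4r-2)/r, and a union bound over the at
   most (M+1)^2 r triples (a, d, c) gives 4 k^(-2 eps) <= 1/2 for large k. *)

From Stdlib Require Import Reals Lra Classical ClassicalDescription ZArith.
From mathcomp Require Import all_boot zify.


Set Implicit Arguments.
Unset Strict Implicit.
Unset Printing Implicit Defensive.

Lemma pbE (P : Prop) : pb P <-> P.
Proof. by rewrite /pb; case: excluded_middle_informative. Qed.

Lemma pigeonhole_count (T : Type) (q K : nat) (f : T -> 'I_q) (s : seq T) :
  0 < q -> 0 < K -> q * K <= size s ->
  exists col : 'I_q, K <= count (fun x => f x == col) s.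
Proof.
move=> q_gt0 K_gt0 qK_le.
have size_sum : size s = \sum_(col < q) count (fun x => f x == col) s.
  rewrite -sum1_size (eq_bigr (fun x => \sum_(col < q) (f x == col : nat))); last first.
    by move=> x _; rewrite (bigD1 (f x)) //= eqxx big1 // => col /negbTE; rewrite eq_sym => ->.
  rewrite exchange_big; apply: eq_bigr => col _.
  by rewrite -sum1_count [RHS]big_mkcond; apply: eq_bigr => x _; case: eqP.
apply/existsP; apply: contraLR qK_le; rewrite negb_exists -ltnNge => /forallP small.
rewrite size_sum (@leq_ltn_trans (\sum_(col < q) K.-1)) //.
  by apply: leq_sum => col _; rewrite -ltnS prednK // ltnNge small.
by rewrite sum_nat_const card_ord ltn_pmul2l // prednK.
Qed.

Lemma asc_wave_exp2 (e : nat -> nat) (n : nat) :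
  (forall i, 1 <= i < n -> e i < e i.+1) -> asc_wave (fun i => 2 ^ e i) n.
Proof.
move=> e_incr; split; [by move=> i _; rewrite expn_gt0 | split].
  by move=> i /e_incr; rewrite ltn_exp2l.
move=> i /andP [i_ge2 i_le].
have [i1 i2] : 1 <= i.-1 < n /\ 1 <= i < n by lia.
have lt1 : 2 ^ e i.-1 < 2 ^ e i by rewrite ltn_exp2l // -{2}(prednK (_ : 0 < i)) ?e_incr //; lia.
have dbl : 2 * 2 ^ e i <= 2 ^ e i.+1 by rewrite -expnS leq_exp2l // e_incr.
lia.
Qed.

Lemma AW_prop_exp2 (K q : nat) : 0 < q -> 0 < K -> AW_prop K q (2 ^ (q * K)).
Proof.
move=> q_gt0 K_gt0 c.
have [col col_many] := @pigeonhole_count _ q K (fun n => c (2 ^ n)) (iota 0 (q * K))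
  q_gt0 K_gt0 (eq_leq (esym (size_iota _ _))).
set s := [seq n <- iota 0 (q * K) | c (2 ^ n) == col].
have size_s : K <= size s by rewrite size_filter.
have s_sorted : sorted ltn s.
  by apply: sorted_filter; [exact: ltn_trans | exact: iota_ltn_sorted].
have s_mem i : 1 <= i <= K -> nth 0 s i.-1 \in s.
  by move=> i_in; apply: mem_nth; apply: leq_trans size_s; lia.
exists (fun i => 2 ^ nth 0 s i.-1); split; [|split].
- apply: (asc_wave_exp2 (e := fun i => nth 0 s i.-1)) => -[|i] // /andP [_ lt_iK] /=.
  apply: (sorted_ltn_nth ltn_trans 0 s_sorted); rewrite ?inE //=; apply: leq_trans size_s; lia.
- move=> i /s_mem; rewrite mem_filter mem_iota /= => /andP [_ lt_qK].
  by rewrite leq_exp2l // ltnW.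
- by move=> i j /s_mem + /s_mem; rewrite !mem_filter => /andP [/eqP -> _] /andP [/eqP -> _].
Qed.

Lemma AW_ge2 (K q : nat) : 0 < q -> 2 <= K -> 2 <= AW K q.
Proof.
move=> q_gt0 K_ge2; rewrite /AW; case: excluded_middle_informative => [ex | no_N]; last first.
  by case: no_N; exists (2 ^ (q * K)); apply/pbE/AW_prop_exp2 => //; lia.
case: ex_minnP => N /pbE AW_N _.
have [w [[w_pos [w_incr _]] [w_le _]]] := AW_N (fun _ => Ordinal q_gt0).
have := w_pos 1 ltac:(lia); have := w_incr 1 ltac:(lia); have := w_le 2 ltac:(lia); lia.
Qed.

Lemma bpar_gt0 (r k : nat) : 2 <= r -> 20 * (4 * r - 4) <= k -> 0 < bpar r k.
Proof.
move=> r_ge2 k_ge; have K_ge2 : 2 <= Kpar r k by rewrite /Kpar leq_divRL; lia.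
by have := AW_ge2 (_ : 0 < r - 1) K_ge2; rewrite /bpar; lia.
Qed.


Section ProductIndependence.
Variables (n : nat) (T : finType).
Notation D := {ffun 'I_n -> T}.

Definition determined_by (S : {set 'I_n}) (E : pred D) :=
  forall u v : D, {in S, u =1 v} -> E u = E v.

(* Swapping the coordinates in S between two outcomes is a bijection of D * D. *)
Lemma card_indep_mul (S : {set 'I_n}) (Q E : pred D) :
  determined_by (~: S) Q -> determined_by S E ->
  #|[set om | Q om && E om]| * #|D| = #|[set om | Q om]| * #|[set om | E om]|.
Proof.
move=> Q_det E_det.
pose mix (u v : D) : D := [ffun g => if g \in S then v g else u g].
pose swap (p : D * D) := (mix p.1 p.2, mix p.2 p.1).
have swapK : involutive swap.
  by case=> u v; congr pair; apply/ffunP => g; rewrite !ffunE; case: (g \in S).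
have Q_mix u v : Q (mix u v) = Q u.
  by apply: Q_det => g; rewrite inE ffunE => /negbTE ->.
have E_mix u v : E (mix v u) = E u by apply: E_det => g; rewrite ffunE => ->.
rewrite -cardsT -!cardsX -(card_preimset _ (inv_inj swapK)); apply: eq_card => -[u v].
by rewrite !inE /= Q_mix E_mix andbT.
Qed.

Lemma card_all_indep_le (p q s : nat) (S : nat -> {set 'I_n}) (E : nat -> pred D) :
  (forall k, k < s -> determined_by (S k) (E k)) ->
  (forall k, k < s -> #|[set om | E k om]| * q <= p * #|D|) ->
  (forall k k', k < k' < s -> [disjoint S k & S k']) ->
  #|[set om | all (E^~ om) (iota 0 s)]| * q ^ s <= p ^ s * #|D|.
Proof.
elim: s => [|s IH] E_det E_card S_disj.
  by rewrite !expn0 muln1 mul1n max_card.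
set Q := fun om => all (E^~ om) (iota 0 s).
have Q_det : determined_by (~: S s) Q.
  move=> u v uv; apply: eq_in_all => k; rewrite mem_iota add0n => k_lt.
  apply: E_det; first lia.
  apply: sub_in1 uv => g; apply/subsetP; rewrite -disjoints_subset S_disj //; lia.
have -> : [set om | all (E^~ om) (iota 0 s.+1)] = [set om | Q om && E s om].
  by apply/setP => om; rewrite !inE -addn1 iotaD all_cat /= andbT.
have [D0 | D_gt0] := posnP #|D|.
  by move: (max_card [set om | Q om && E s om]); rewrite D0 leqn0 => /eqP ->.
have QE_card := card_indep_mul Q_det (E_det s (ltnSn s)).
rewrite -(leq_pmul2r D_gt0).
have -> : p ^ s.+1 * #|D| * #|D| = (p ^ s * #|D|) * (p * #|D|) by rewrite expnSr mulnACA mulnA.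
rewrite mulnAC QE_card expnSr mulnACA.
apply: leq_mul; last exact: E_card.
apply: IH => [k|k|k k'] k_lt; [apply: E_det | apply: E_card | apply: S_disj]; lia.
Qed.

End ProductIndependence.

Lemma modn_shift_onto (r m c : nat) : 0 < r -> c < r -> exists j : 'I_r, (m + j) %% r = c.
Proof.
move=> r_gt0 c_lt; exists (Ordinal (ltn_pmod (c + (r - m %% r)) r_gt0)) => /=.
have := ltn_pmod m r_gt0; have := divn_eq m r.
rewrite modnDmr; set q := m %/ r; set s := m %% r => mE s_lt.
have -> : m + (c + (r - s)) = q.+1 * r + c by rewrite mulSn; lia.
by rewrite modnMDl modn_small.
Qed.

Lemma Aent_consecutive (r c p : nat) : 2 <= r -> c < r -> p.+1 < 2 * r ->
  exists row : 'I_r * 'I_r,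
    Aent r row.1 row.2.+1 p.+1 = c /\ Aent r row.1 row.2.+1 p.+2 = c.
Proof.
move=> r_ge2 c_lt p_lt; have r_gt0 : 0 < r by lia.
have [m [-> | ->]] : exists m, p = m.*2 \/ p = m.*2.+1.
  by exists p./2; rewrite -{1 3}(odd_double_half p); case: (odd p); [right | left].
- have [j jE] := modn_shift_onto m r_gt0 c_lt.
  exists (j, Ordinal r_gt0); rewrite /Aent /= odd_double -jE.
  by split; congr (_ %% _); lia.
- have [j jE] := modn_shift_onto m.+1 r_gt0 c_lt.
  exists (j, Ordinal r_ge2); rewrite /Aent /= odd_double -jE.
  by split; congr (_ %% _); lia.
Qed.

Lemma Aent_last (r c i : nat) : 0 < r -> c < r -> exists j : 'I_r, Aent r j i.+1 (2 * r) = c.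
Proof.
move=> r_gt0 c_lt; have [j jE] := modn_shift_onto (i + (r - 1)) r_gt0 c_lt.
exists j; rewrite /Aent oddM /= -jE; congr (_ %% _).
have -> : (2 * r - 1) %/ 2 = r - 1 by lia.
lia.
Qed.

Lemma card_leq_inj_pair (D U : finType) (A : {set D}) (phi : D -> D) (psi : D -> U) :
  (forall om, phi om \in A) -> injective (fun om => (phi om, psi om)) ->
  #|D| <= #|A| * #|U|.
Proof.
move=> phi_in inj.
rewrite -cardsT -(card_imset _ inj) -[#|U|]cardsT -cardsX; apply: subset_leq_card.
by apply/subsetP => _ /imsetP [om _ ->]; rewrite !inE phi_in.
Qed.

Section Labels.
Variables (r b M : nat).
Hypothesis r_ge2 : 2 <= r.
Notation G := (ngroups r b M).
Notation O := (outcome r b M).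

Lemma group_index_lt (l : nat) : 1 <= l <= nblocks b M -> (l - 1) %/ (2 * r) < G.
Proof.
move=> l_in; rewrite /ngroups ltn_divLR; last by lia.
have := ltn_pmod (nblocks b M + 2 * r - 1) (_ : 0 < 2 * r).
have := divn_eq (nblocks b M + 2 * r - 1) (2 * r).
move=> + /(_ ltac:(lia)); lia.
Qed.

Lemma labelE (om : O) (l : nat) (g : 'I_G) :
  1 <= l <= nblocks b M -> val g = (l - 1) %/ (2 * r) ->
  label om l = Some (Aent r (om g).1 (om g).2.+1 ((l - 1) %% (2 * r)).+1).
Proof. by move=> l_in gE; rewrite /label l_in -gE valK; case: (om g). Qed.

Lemma label_determined (u v : O) (l : nat) :
  (forall g : 'I_G, val g = (l - 1) %/ (2 * r) -> u g = v g) -> label u l = label v l.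
Proof.
move=> uv; rewrite /label; case: (1 <= l <= nblocks b M) => //.
by case: insubP => // g _ gE; rewrite uv.
Qed.

Definition twin_labelled (om : O) (l c : nat) : bool :=
  (label om l == Some c) && (label om l.+1 == Some c).

Lemma card_twin_labelled_within (l c : nat) (g : 'I_G) :
  1 <= l -> l.+1 <= nblocks b M -> c < r ->
  val g = (l - 1) %/ (2 * r) -> ((l - 1) %% (2 * r)).+1 < 2 * r ->
  #|O| <= #|[set om | twin_labelled om l c]| * (r * r).
Proof.
move=> l_ge1 l_lt c_lt gE p_lt.
set p := (l - 1) %% (2 * r) in p_lt.
have lE : l = (l - 1) %/ (2 * r) * (2 * r) + p.+1 by rewrite addnS -divn_eq; lia.
have gE' : val g = (l.+1 - 1) %/ (2 * r).
  by rewrite subn1 /= {1}lE divnMDl ?(divn_small p_lt) ?addn0 //; lia.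
have pE : (l.+1 - 1) %% (2 * r) = p.+1 by rewrite subn1 /= {1}lE modnMDl modn_small.
have [row [row1 row2]] := Aent_consecutive r_ge2 c_lt p_lt.
have -> : r * r = #|{: 'I_r * 'I_r}| by rewrite card_prod card_ord.
apply: (card_leq_inj_pair (A := [set om | twin_labelled om l c])
  (phi := fun om => [ffun h => if h == g then row else om h]) (psi := fun om => om g)).
  move=> om; rewrite inE /twin_labelled (labelE _ _ gE) ?(labelE _ _ gE') //; try lia.
  by rewrite pE !ffunE eqxx row1 row2 !eqxx.
move=> u v [/ffunP uv ugv]; apply/ffunP => h; have := uv h; rewrite !ffunE.
by case: eqP => [->|].
Qed.

(* Across a group boundary the two labels are the last entry of one row and the
   first entry j of the next; the first row can be chosen to match any i. *)
Lemma card_twin_labelled_across (l c : nat) (g1 g2 : 'I_G) :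
  1 <= l -> l.+1 <= nblocks b M -> c < r ->
  val g1 = (l - 1) %/ (2 * r) -> val g2 = l %/ (2 * r) -> ((l - 1) %% (2 * r)).+1 = 2 * r ->
  #|O| <= #|[set om | twin_labelled om l c]| * (r * r).
Proof.
move=> l_ge1 l_lt c_lt g1E g2E p_last.
have lE : l = ((l - 1) %/ (2 * r)).+1 * (2 * r).
  move: (divn_eq (l - 1) (2 * r)) p_last.
  by move: (_ %/ _) (_ %% _) => q y; rewrite (mulSn q); lia.
have g2E' : val g2 = (l.+1 - 1) %/ (2 * r) by rewrite subSS subn0.
have pE : (l.+1 - 1) %% (2 * r) = 0 by rewrite subSS subn0 lE modnMl.
have g12 : (g2 == g1) = false.
  by apply/negbTE/eqP => /(congr1 val); rewrite g2E g1E lE mulnK //; lia.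
have [f fE] := fin_all_exists (fun i : 'I_r => Aent_last i (ltnW r_ge2) c_lt).
have -> : r * r = #|{: 'I_r * 'I_r}| by rewrite card_prod card_ord.
apply: (card_leq_inj_pair (A := [set om | twin_labelled om l c])
  (phi := fun om => [ffun h => if h == g1 then (f (om g1).2, (om g1).2)
                               else if h == g2 then (Ordinal c_lt, (om g2).2) else om h])
  (psi := fun om => ((om g1).1, (om g2).1))).
  move=> om; rewrite inE /twin_labelled (labelE _ _ g1E) ?(labelE _ _ g2E') //; try lia.
  by rewrite pE p_last !ffunE eqxx g12 eqxx /= fE /Aent /= modn_small ?eqxx.
move=> u v [/ffunP uv g1uv g2uv]; apply/ffunP => h; have := uv h; rewrite !ffunE.
case: eqP => [->|_]; first by case: (u g1) g1uv => ? ?; case: (v g1) => ? ? /= -> [_ ->].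
case: eqP => [->|_] //; by case: (u g2) g2uv => ? ?; case: (v g2) => ? ? /= -> [->].
Qed.

Lemma card_twin_labelled (l c : nat) : 1 <= l -> l.+1 <= nblocks b M -> c < r ->
  #|O| <= #|[set om | twin_labelled om l c]| * (r * r).
Proof.
move=> l_ge1 l_lt c_lt.
have g1_lt : (l - 1) %/ (2 * r) < G by apply: group_index_lt; lia.
have g2_lt : l %/ (2 * r) < G by have := group_index_lt (l := l.+1); rewrite subn1; apply; lia.
have p_lt2r : (l - 1) %% (2 * r) < 2 * r by apply: ltn_pmod; lia.
have [p_lt | p_last] : ((l - 1) %% (2 * r)).+1 < 2 * r \/ ((l - 1) %% (2 * r)).+1 = 2 * r by lia.
- exact: (card_twin_labelled_within (g := Ordinal g1_lt)).
- exact: (card_twin_labelled_across (g1 := Ordinal g1_lt) (g2 := Ordinal g2_lt)).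
Qed.

End Labels.

Lemma card_bigcup_le (D I : finType) (F : I -> {set D}) :
  #|\bigcup_i F i| <= \sum_i #|F i|.
Proof.
elim/big_ind2: _ => // [|m X n Y X_le Y_le]; first by rewrite cards0.
exact: leq_trans (leq_of_leqif (leq_card_setU X Y)) (leq_add X_le Y_le).
Qed.

Definition block_of (b x : nat) : nat := (x - 1) %/ b + 1.

Lemma in_block_of (b x : nat) : 0 < b -> 0 < x -> in_block b (block_of b x) x.
Proof.
move=> b_gt0 x_gt0; rewrite /in_block /block_of addnK addn1.
have := leq_divM (x - 1) b; have := ltn_ceil (x - 1) b_gt0; lia.
Qed.

Lemma block_of_le_nblocks (b x M : nat) : 0 < b -> 1 <= x <= M -> block_of b x <= nblocks b M.
Proof.
move=> b_gt0 x_in; rewrite /block_of /nblocks leq_divRL // mulnDl mul1n.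
have := leq_divM (x - 1) b; lia.
Qed.

Lemma block_of_gap (b x y m : nat) : 0 < b -> 1 <= x -> x + m * b < y ->
  block_of b x + m <= block_of b y.
Proof.
move=> b_gt0 x_ge1 xy; rewrite /block_of addnAC leq_add2r leq_divRL // mulnDl.
have := leq_divM (x - 1) b; lia.
Qed.

Lemma card_setC_mul_le (D : finType) (A : {set D}) (q : nat) :
  #|D| <= #|A| * q -> #|~: A| * q <= (q - 1) * #|D|.
Proof.
rewrite -(cardsC A); move: #|A| #|~: A| => x y.
by case: q => [|q]; rewrite ?muln0 ?leqn0 ?addn_eq0 ?subSS ?subn0; nia.
Qed.

Definition ntests (r t : nat) : nat := (t - 2) %/ (2 * r + 1) + 1.

Lemma test_index_le (r t k : nat) : k < ntests r t -> k * (2 * r + 1) <= t - 2.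
Proof. by rewrite -leq_divRL ?addn1 // /ntests; lia. Qed.

(* The tested terms are every (2r+1)-th term of the progression; as d > b they
   are more than 2r+1 blocks apart, so their block pairs lie in disjoint groups. *)
Section TestedBlocks.
Variables (r b M t : nat).
Hypotheses (r_ge2 : 2 <= r) (b_gt0 : 0 < b) (t_ge2 : 2 <= t).
Notation G := (ngroups r b M).
Notation O := (outcome r b M).
Notation ntests := (ntests r t).

Definition test_block (a d k : nat) : nat := block_of b (a + k * (2 * r + 1) * d).

Definition test_groups (a d k : nat) : {set 'I_G} :=
  [set g : 'I_G | (val g == (test_block a d k - 1) %/ (2 * r))
                  || (val g == test_block a d k %/ (2 * r))].

Variables (a d : nat).
Hypotheses (b_lt_d : b < d) (a_ge1 : 1 <= a) (last_le : a + (t - 1) * d <= M).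

Lemma test_block_bounds (k : nat) : k < ntests ->
  1 <= test_block a d k /\ (test_block a d k).+1 <= nblocks b M.
Proof.
move/test_index_le => k_le; split; first by rewrite /test_block /block_of addn1.
have next_le : a + k * (2 * r + 1) * d + d <= M.
  apply: leq_trans last_le; rewrite -addnA leq_add2l -{2}(mul1n d) -mulnDl leq_mul2r.
  by apply/orP; right; lia.
set x := a + k * (2 * r + 1) * d in next_le *.
have x_ge1 : 1 <= x by rewrite /x; lia.
have := @block_of_gap b x (x + d) 1 b_gt0 x_ge1 ltac:(lia).
have := @block_of_le_nblocks b (x + d) M b_gt0 ltac:(lia).
rewrite /test_block -/x; lia.
Qed.

Lemma test_groups_disjoint (k k' : nat) : k < k' < ntests ->
  [disjoint test_groups a d k & test_groups a d k'].
Proof.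
move=> /andP [lt_kk' k'_lt].
have [L_ge1 _] := test_block_bounds (ltn_trans lt_kk' k'_lt).
have [L'_ge1 _] := test_block_bounds k'_lt.
have gap : test_block a d k + (2 * r + 1) <= test_block a d k'.
  apply: block_of_gap => //; first exact: leq_trans a_ge1 (leq_addr _ _).
  have gap_bd : (2 * r + 1) * b < (2 * r + 1) * d by rewrite ltn_pmul2l ?addn1.
  have : (k + 1) * (2 * r + 1) * d <= k' * (2 * r + 1) * d.
    by rewrite leq_mul // leq_mul // addn1.
  rewrite mulnDl mul1n [(2 * r + 1) * d]mulnC in gap_bd *; lia.
set L := test_block a d k in L_ge1 gap *; set L' := test_block a d k' in L'_ge1 gap *.
have groups_lt : L %/ (2 * r) < (L' - 1) %/ (2 * r).
  rewrite leq_divRL ?(mulSn (L %/ _)); last by lia.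
  have := leq_divM L (2 * r); lia.
have := leq_div2r (2 * r) (leq_subr 1 L'); have := leq_div2r (2 * r) (leq_subr 1 L).
rewrite -setI_eq0 /test_groups -/L -/L'; move: groups_lt.
move: ((L - 1) %/ _) (L %/ _) ((L' - 1) %/ _) (L' %/ _) => x1 x2 y1 y2 x2_y1 x12 y12.
apply/eqP/setP => g; rewrite !inE; apply/negP => /andP [/orP [] /eqP -> /orP [] /eqP]; lia.
Qed.

Lemma card_untwinned_tests_le (c : nat) : c < r ->
  #|[set om : O | all (fun k => ~~ twin_labelled om (test_block a d k) c) (iota 0 ntests)]|
    * (r * r) ^ ntests <= (r * r - 1) ^ ntests * #|O|.
Proof.
move=> c_lt; apply: (card_all_indep_le (S := test_groups a d)) => [k k_lt|k k_lt|]; last first.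
- exact: test_groups_disjoint.
- have [L_ge1 L_lt] := test_block_bounds k_lt.
  have -> : [set om : O | ~~ twin_labelled om (test_block a d k) c]
            = ~: [set om : O | twin_labelled om (test_block a d k) c].
    by apply/setP => om; rewrite !inE.
  exact/card_setC_mul_le/card_twin_labelled.
- move=> u v uv /=; rewrite /twin_labelled.
  by rewrite !(label_determined (u := u) (v := v)) // => g gE; apply: uv;
    rewrite inE gE ?subn1 eqxx ?orbT.
Qed.

End TestedBlocks.

Section BadProgressions.
Variables (r b M t : nat).
Hypotheses (r_ge2 : 2 <= r) (b_gt0 : 0 < b) (t_ge2 : 2 <= t).
Notation O := (outcome r b M).
Notation s := (ntests r t).

Definition untwinned_tests (om : O) (a d c : nat) : bool :=
  all (fun k => ~~ twin_labelled om (test_block r b a d k) c) (iota 0 s).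

Definition admissible_AP (a d : nat) : bool := [&& b < d, 1 <= a & a + (t - 1) * d <= M].

Lemma bad_AP_untwinned_tests (om : O) : exists_bad_AP om t ->
  exists (a d : 'I_M.+1) (c : 'I_r), admissible_AP a d && untwinned_tests om a d c.
Proof.
move=> [a [d [b_lt_d [a_ge1 [last_le not_good]]]]].
have [a_lt d_lt] : a < M.+1 /\ d < M.+1.
  have : d <= (t - 1) * d by rewrite leq_pmull; lia.
  by move: last_le; move: (_ * d) => x; lia.
have [c [c_lt no_twin]] : exists c, c < r /\ ~ (exists i l, i < t /\ in_block b l (a + i * d) /\
    label om l = Some c /\ label om l.+1 = Some c).
  by apply: NNPP => all_twin; apply: not_good => c c_lt; apply: NNPP => ?; apply: all_twin; exists c.
exists (Ordinal a_lt), (Ordinal d_lt), (Ordinal c_lt).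
rewrite /admissible_AP /= b_lt_d a_ge1 last_le /=; apply/allP => k; rewrite mem_iota add0n => k_lt.
apply/negP => /andP [/eqP twin1 /eqP twin2]; apply: no_twin.
exists (k * (2 * r + 1)), (test_block r b a d k); split; first by have := test_index_le k_lt; lia.
by split => //; apply: in_block_of => //; lia.
Qed.

Lemma card_bad_AP_le :
  #|[set om : O | pb (exists_bad_AP om t)]| * (r * r) ^ s
    <= M.+1 * M.+1 * r * ((r * r - 1) ^ s * #|O|).
Proof.
pose U (x : 'I_M.+1 * 'I_M.+1 * 'I_r) :=
  [set om : O | admissible_AP x.1.1 x.1.2 && untwinned_tests om x.1.1 x.1.2 x.2].
have U_card x : #|U x| * (r * r) ^ s <= (r * r - 1) ^ s * #|O|.
  have [adm | not_adm] := boolP (admissible_AP x.1.1 x.1.2); last first.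
    by rewrite (_ : U x = set0) ?cards0 //; apply/setP => om; rewrite !inE (negbTE not_adm).
  case/and3P: (adm) => b_lt_d a_ge1 last_le.
  apply: leq_trans _ (card_untwinned_tests_le r_ge2 b_gt0 t_ge2 b_lt_d a_ge1 last_le (ltn_ord x.2)).
  by rewrite leq_mul2r subset_leq_card ?orbT //; apply/subsetP => om; rewrite !inE adm.
have bad_sub : [set om : O | pb (exists_bad_AP om t)] \subset \bigcup_x U x.
  apply/subsetP => om; rewrite inE => /pbE /bad_AP_untwinned_tests [a [d [c untw]]].
  by apply/bigcupP; exists (a, d, c); rewrite ?inE.
apply: leq_trans (leq_mul (leq_trans (subset_leq_card bad_sub) (card_bigcup_le U)) (leqnn _)) _.
rewrite big_distrl /= (@leq_trans (\sum_(x : 'I_M.+1 * 'I_M.+1 * 'I_r) ((r * r - 1) ^ s * #|O|))) //.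
  by apply: leq_sum => x _; apply: U_card.
by rewrite sum_nat_const !card_prod !card_ord.
Qed.

End BadProgressions.

Lemma bad_AP_half (r b M t : nat) : 2 <= r -> 0 < b -> 2 <= t ->
  2 * (M.+1 * M.+1 * r * (r * r - 1) ^ ntests r t) <= (r * r) ^ ntests r t ->
  2 * #|[set om : outcome r b M | pb (exists_bad_AP om t)]| <= #|outcome r b M|.
Proof.
move=> r_ge2 b_gt0 t_ge2 factor_le.
have pow_gt0 : 0 < (r * r) ^ ntests r t by rewrite expn_gt0 muln_gt0; lia.
rewrite -(leq_pmul2r pow_gt0) -mulnA.
apply: leq_trans (leq_mul (leqnn 2) (card_bad_AP_le _ r_ge2 b_gt0 t_ge2)) _.
rewrite [X in _ <= X]mulnC !mulnA leq_mul //.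
by move: factor_le; rewrite !mulnA.
Qed.

Local Open Scope R_scope.

Lemma INR_addn (m n : nat) : INR (m + n) = INR m + INR n.
Proof. by rewrite addnE plus_INR. Qed.

Lemma INR_muln (m n : nat) : INR (m * n) = INR m * INR n.
Proof. by rewrite mulnE mult_INR. Qed.

Lemma INR_expn (m n : nat) : INR (m ^ n) = INR m ^ n.
Proof. by elim: n => [|n IHn] //; rewrite expnS INR_muln IHn. Qed.

Lemma fl_gt (x : R) : x - 1 < INR (fl x).
Proof.
rewrite /fl; have [Ix_le Ix_gt] := base_Int_part x.
have [Ix_ge0 | Ix_lt0] := Z_le_gt_dec 0 (Int_part x).
  by rewrite INR_IZR_INZ Z2Nat.id //; lra.
have : IZR (Int_part x) <= -1 by apply: IZR_le; lia.
have := pos_INR (Z.to_nat (Int_part x)); lra.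
Qed.

Lemma fl_le (x : R) : 0 <= x -> INR (fl x) <= x.
Proof.
move=> x_ge0; rewrite /fl; have [Ix_le _] := base_Int_part x.
have [Ix_ge0 | Ix_lt0] := Z_le_gt_dec 0 (Int_part x).
  by rewrite INR_IZR_INZ Z2Nat.id.
by case: (Int_part x) Ix_lt0 => [|p|p] //= _; lra.
Qed.

Lemma exp_le_exp (x y : R) : x <= y -> exp x <= exp y.
Proof. by case/Rle_lt_or_eq_dec => [/exp_increasing|->]; lra. Qed.

Lemma ln_le_ln (x y : R) : 0 < x -> x <= y -> ln x <= ln y.
Proof. by move=> x_gt0; case/Rle_lt_or_eq_dec => [/(ln_increasing _ _ x_gt0)|->]; lra. Qed.

Definition sq_ratio (r : nat) : R := INR r ^ 2 / (INR r ^ 2 - 1).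

Definition tlen_real (r k : nat) : R :=
  let L := log2 (sq_ratio r) in
  (4 * INR r - 2) * (2 * INR r + 1) / L * log2 (INR k)
    + (2 * INR r + 1) * (log2 (INR r) + 1) / L.

Lemma tlenE (r k : nat) : tlen r k = fl (tlen_real r k).
Proof. by []. Qed.

Lemma INR_ge2 (r : nat) : (2 <= r)%N -> 2 <= INR r.
Proof. by move=> r_ge2; apply: (le_INR 2); apply/leP. Qed.

Lemma ln2_bounds : 0 < ln 2 < 1.
Proof.
split; first by rewrite -ln_1; apply: ln_increasing; lra.
rewrite -[X in _ < X]ln_exp; apply: ln_increasing; first lra.
by have := exp_ineq1 1; lra.
Qed.

Lemma sq_ratio_bounds (r : nat) : (2 <= r)%N -> 1 < sq_ratio r <= 2.
Proof.
move/INR_ge2 => r_ge2; rewrite /sq_ratio.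
split; [apply: (Rmult_lt_reg_r (INR r ^ 2 - 1)) | apply: (Rmult_le_reg_r (INR r ^ 2 - 1))];
  rewrite ?/Rdiv ?Rmult_assoc ?Rinv_l; nra.
Qed.

Lemma ln_sq_ratio_bounds (r : nat) : (2 <= r)%N -> 0 < ln (sq_ratio r) <= ln 2.
Proof.
move/sq_ratio_bounds => q_in; split; last by apply: ln_le_ln; lra.
by rewrite -ln_1; apply: ln_increasing; lra.
Qed.

Lemma tlen_real_mul_ln (r k : nat) : (2 <= r)%N ->
  tlen_real r k * ln (sq_ratio r)
    = (2 * INR r + 1) * ((4 * INR r - 2) * ln (INR k) + ln (INR r) + ln 2).
Proof.
move=> r_ge2; have [L_gt0 _] := ln_sq_ratio_bounds r_ge2; have [ln2_gt0 _] := ln2_bounds.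
by rewrite /tlen_real /log2; field; lra.
Qed.

Lemma tlen_le_ntests (r t : nat) : (t <= ntests r t * (2 * r + 1) + 1)%N.
Proof. by have := ltn_ceil (t - 2) (_ : (0 < 2 * r + 1)%N); rewrite /ntests addn1; lia. Qed.

Lemma ntests_ln_ge (r k t : nat) : (2 <= r)%N -> tlen_real r k - 1 < INR t ->
  (4 * INR r - 2) * ln (INR k) + ln (INR r) <= INR (ntests r t) * ln (sq_ratio r).
Proof.
move=> r_ge2 t_gt; have [L_gt0 L_le] := ln_sq_ratio_bounds r_ge2.
have := tlen_real_mul_ln k r_ge2; have := INR_ge2 r_ge2.
have t_le : INR t <= INR (ntests r t) * (2 * INR r + 1) + 1.
  have := le_INR _ _ (elimT leP (tlen_le_ntests r t)).
  by rewrite INR_addn INR_muln [INR (2 * r + 1)]INR_addn INR_muln.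
set s := INR (ntests r t) in t_le *; set L := ln (sq_ratio r) in L_gt0 L_le *.
set T := tlen_real r k in t_gt *; move=> r_ge2' TL.
have sL : s * L * (2 * INR r + 1) >= T * L - 2 * L.
  have : s * (2 * INR r + 1) >= T - 2 by lra.
  by move/Rge_le/(Rmult_le_compat_r L) => /(_ (Rlt_le _ _ L_gt0)); lra.
have : (2 * INR r + 1) * ln 2 >= 2 * L by nra.
nra.
Qed.

Lemma exp4_gt8 : 8 < exp 4.
Proof.
have -> : exp 4 = exp 2 * exp 2 by rewrite -exp_plus; congr exp; lra.
by have := exp_ineq1 2; nra.
Qed.

Lemma twice_sq_le_sq_ratio_pow (r k t M : nat) (e : R) : (2 <= r)%N -> 0 < e <= 1 ->
  2 <= e * ln (INR k) -> INR M <= Rpower (INR k) (2 * INR r - 1 - e) ->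
  tlen_real r k - 1 < INR t ->
  2 * ((INR M + 1) ^ 2 * INR r) <= sq_ratio r ^ ntests r t.
Proof.
move=> r_ge2 e_in eX_ge2 M_le t_gt.
have r_ge2' := INR_ge2 r_ge2; have [L_gt0 _] := ln_sq_ratio_bounds r_ge2.
set X := ln (INR k) in eX_ge2 M_le *.
have X_ge2 : 2 <= X by nra.
set Y := Rpower (INR k) (2 * INR r - 1 - e) in M_le.
have Y_ge1 : 1 <= Y.
  by rewrite /Y /Rpower -[Z in Z <= _]exp_0 -/X; apply: exp_le_exp; apply: Rmult_le_pos; lra.
have exp_split : exp ((4 * INR r - 2) * X) = Y ^ 2 * exp (2 * (e * X)).
  by rewrite /Y /Rpower -/X /= Rmult_1_r -!exp_plus; congr exp; ring.
have exp_big : 8 <= exp (2 * (e * X)).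
  by apply: Rle_trans (Rlt_le _ _ exp4_gt8) (exp_le_exp _); lra.
have sq_le : (INR M + 1) ^ 2 <= 4 * Y ^ 2 by have := pos_INR M; nra.
have [q_gt1 _] := sq_ratio_bounds r_ge2.
rewrite -[sq_ratio r ^ _]Rpower_pow; last lra.
apply: Rle_trans (_ : exp ((4 * INR r - 2) * X) * INR r <= _).
  have : 2 * (INR M + 1) ^ 2 <= Y ^ 2 * exp (2 * (e * X)) by nra.
  by rewrite exp_split => /(Rmult_le_compat_r (INR r) _ _ (pos_INR r)); lra.
have -> : exp ((4 * INR r - 2) * X) * INR r = exp ((4 * INR r - 2) * X + ln (INR r)).
  by rewrite exp_plus exp_ln //; lra.
by rewrite /Rpower; apply: exp_le_exp; apply: ntests_ln_ge.
Qed.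

Lemma twice_sq_le_sq_ratio_pow_nat (r M s : nat) : (2 <= r)%N ->
  2 * ((INR M + 1) ^ 2 * INR r) <= sq_ratio r ^ s ->
  (2 * (M.+1 * M.+1 * r * (r * r - 1) ^ s) <= (r * r) ^ s)%N.
Proof.
move=> r_ge2 real_le; apply/leP/INR_le; have r_ge2' := INR_ge2 r_ge2.
have -> : INR ((r * r) ^ s) = sq_ratio r ^ s * (INR r ^ 2 - 1) ^ s.
  by rewrite -Rpow_mult_distr /sq_ratio INR_expn INR_muln; congr pow; field; nra.
rewrite !INR_muln INR_expn minus_INR ?INR_muln; last by apply/leP; rewrite muln_gt0; lia.
rewrite !S_INR /= !Rplus_0_l Rmult_1_r.
have : 0 <= (INR r * INR r - 1) ^ s by apply: pow_le; nra.
move: real_le; rewrite /= Rmult_1_r => real_le pow_ge0.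
by have := Rmult_le_compat_r _ _ _ pow_ge0 real_le; lra.
Qed.

Lemma ratio_le_inv2 (m n : nat) : (2 * m <= n)%N -> INR m / INR n <= / 2.
Proof.
move=> /leP/le_INR; rewrite INR_muln /= => le_mn.
have [n0 | n_gt0] := Req_dec (INR n) 0.
  by rewrite n0 /Rdiv Rinv_0 Rmult_0_r; lra.
have n_pos : 0 < INR n by have := pos_INR n; lra.
apply: (Rmult_le_reg_r _ _ _ n_pos).
by rewrite /Rdiv Rmult_assoc Rinv_l //; lra.
Qed.

Lemma Meps_le (r : nat) (eps : R) (k : nat) : (1 <= r)%N ->
  INR (Meps r eps k) <= Rpower (INR k) (2 * INR r - 1 - eps).
Proof.
move=> r_ge1; have r_ge1' : 1 <= INR r by apply: (le_INR 1); apply/leP.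
rewrite /Meps; set A := Rpower _ _; have A_ge0 : 0 <= A by rewrite /A /Rpower; left; apply: exp_pos.
set D := 2 ^ (r - 1) * (40 * INR r) ^ (r * r - 1).
have D_ge1 : 1 <= D.
  by rewrite /D -[1]Rmult_1_r; apply: Rmult_le_compat; try apply: pow_R1_Rle; lra.
apply: Rle_trans (fl_le _) _.
  by apply: Rmult_le_pos => //; left; apply: Rinv_0_lt_compat; lra.
rewrite /Rdiv -[X in _ <= X]Rmult_1_r; apply: Rmult_le_compat_l => //.
by rewrite -Rinv_1; apply: Rinv_le_contravar; lra.
Qed.

Lemma tlen_ge2 (r k : nat) (e : R) : (2 <= r)%N -> 0 < e <= 1 ->
  2 <= e * ln (INR k) -> (2 <= tlen r k)%N.
Proof.
move=> r_ge2 e_in eX_ge2; have r_ge2' := INR_ge2 r_ge2.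
apply/leP/INR_le/Rlt_le; have := fl_gt (tlen_real r k); rewrite -tlenE /=.
have [L_gt0 L_le] := ln_sq_ratio_bounds r_ge2; have [ln2_gt0 ln2_lt1] := ln2_bounds.
have ln_r_ge0 : 0 <= ln (INR r) by rewrite -ln_1; apply: ln_le_ln; lra.
have := tlen_real_mul_ln k r_ge2; set X := ln (INR k) in eX_ge2 *.
have X_ge2 : 2 <= X by nra.
set T := tlen_real r k; set L := ln (sq_ratio r) in L_gt0 L_le * => TL.
have P_ge6 : 6 <= (4 * INR r - 2) * X + ln (INR r) + ln 2 by nra.
move: TL P_ge6; move: (_ + ln 2) => P TL P_ge6.
have : 3 <= T * L by rewrite TL; nra.
nra.
Qed.

Definition k_threshold (r : nat) (eps : R) : nat :=
  maxn (20 * (4 * r - 4)) (fl (exp (2 / Rmin eps 1))).+1.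

Lemma Rmin1_bounds (eps : R) : 0 < eps -> 0 < Rmin eps 1 <= 1.
Proof. by split; [apply: Rmin_glb_lt | apply: Rmin_r]; lra. Qed.

Lemma k_threshold_ln (r : nat) (eps : R) (k : nat) : 0 < eps -> (k_threshold r eps <= k)%N ->
  2 <= Rmin eps 1 * ln (INR k).
Proof.
move=> /Rmin1_bounds [e_gt0 _]; rewrite geq_max => /andP [_ /leP/le_INR].
set e := Rmin eps 1 in e_gt0 *; rewrite S_INR => k_ge.
have : 2 / e <= ln (INR k).
  have := fl_gt (exp (2 / e)); have := exp_pos (2 / e).
  by rewrite -[X in X <= _]ln_exp => ? ?; apply: ln_le_ln; lra.
move/(Rmult_le_compat_l e) => /(_ (Rlt_le _ _ e_gt0)).
by rewrite /Rdiv -Rmult_assoc (Rmult_comm e 2) Rmult_assoc Rinv_r; lra.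
Qed.

Lemma Meps_le_threshold (r : nat) (eps : R) (k : nat) : (2 <= r)%N -> 0 < eps ->
  (k_threshold r eps <= k)%N -> INR (Meps r eps k) <= Rpower (INR k) (2 * INR r - 1 - Rmin eps 1).
Proof.
move=> r_ge2 eps_gt0 k_ge; apply: Rle_trans (Meps_le _ _ (ltnW r_ge2)) (Rle_Rpower _ _ _ _ _).
  by apply: (le_INR 1); apply/leP; move: k_ge; rewrite geq_max; lia.
by have := Rmin_l eps 1; lra.
Qed.

Local Close Scope R_scope.

Theorem lemma2p2 (r : nat) (eps : R) :
  2 <= r -> (Rlt 0 eps) ->
  exists k0 : nat, forall k : nat, k0 <= k ->
    Rle (prob_bad r (bpar r k) (Meps r eps k) (tlen r k)) (Rinv 2).
Proof.
move=> r_ge2 eps_gt0; exists (k_threshold r eps) => k k_ge.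
have e_in := Rmin1_bounds eps_gt0; have eX_ge2 := k_threshold_ln eps_gt0 k_ge.
have b_gt0 : 0 < bpar r k by apply: bpar_gt0 => //; move: k_ge; rewrite geq_max => /andP [].
have t_gt := fl_gt (tlen_real r k); rewrite -tlenE in t_gt.
apply: ratio_le_inv2; rewrite cardsT; apply: bad_AP_half => //; first exact: tlen_ge2 e_in eX_ge2.
apply/twice_sq_le_sq_ratio_pow_nat/(twice_sq_le_sq_ratio_pow r_ge2 e_in eX_ge2 _ t_gt) => //.
exact: Meps_le_threshold.
Qed.
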